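(* Let $\sigma$ be a permutation, $f\in\mathbb Z_{\ge1}$ a colour and $\iota\in[|\sigma|+1]$. Then $$\mathbb C(\sigma^{*\iota})(|\sigma|+1)=f\iff z_\sigma(f)\le\iota<z_\sigma(f-1).$$
   Context: The RITMO colouring $\mathbb C(\sigma):[|\sigma|]\to\mathbb Z_{\ge1}$ of a permutation $\sigma$ processes indices in decreasing order of value, giving each index $i$ the smallest positive integer $c$ such that no already coloured index $j<i$ has colour $c$ (equivalently: colour 1 on left-to-right maxima, colour 2 on the left-to-right maxima of the remaining entries, etc.). For $\sigma\in\mathcal S_m$ and $\iota\in[m+1]$, $\sigma^{*\iota}$ is the permutation of $[m+1]$ with entries in the same relative order as $\sigma(1),\dots,\sigma(m),\iota-1/2$. For a colour $f\ge1$: if some index of $\sigma$ has colour $f$ under $\mathbb C(\sigma)$, let $p$ be the largest such index and set $z_\sigma(f)=\sigma(p)+1$; otherwise $z_\sigma(f)=1$. By convention $z_\sigma(0)=|\sigma|+2$. *)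

From mathcomp Require Import all_boot all_order all_fingroup.
Set Implicit Arguments. Unset Strict Implicit. Unset Printing Implicit Defensive.

(* A permutation is encoded as its one-line notation: a sequence of values.
   Values are 1-based (a permutation of [m] = {1..m}); positions in the
   sequence are 0-based (paper's index k corresponds to position k-1). *)

Definition perm_seq (m : nat) (s : 'S_m) : seq nat :=
  [seq (s i).+1 | i <- enum 'I_m].

(* sigma^{*iota}: entries in the same relative order as
   sigma(1),...,sigma(m), iota - 1/2.  Entries v >= iota get shifted up,
   the new last entry gets value iota. *)
Definition ins_perm (s : seq nat) (iota : nat) : seq nat :=
  rcons [seq if iota <= v then v.+1 else v | v <- s] iota.

(* One step of the RITMO colouring: colour the position i holding value v
   with the smallest c >= 1 such that no already coloured position j < i
   has colour c.  (col j = 0 means "not yet coloured".) *)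
Definition ritmo_step (s : seq nat) (col : nat -> nat) (v : nat) : nat -> nat :=
  let i := index v s in
  let c := (find (fun c => all (fun j => col j != c) (iota 0 i))
                 (iota 1 (size s).+1)).+1 in
  fun j => if j == i then c else col j.

Definition ritmo (s : seq nat) : nat -> nat :=
  foldl (ritmo_step s) (fun _ => 0) (rev (iota 1 (size s))).

Definition zfun (s : seq nat) (f : nat) : nat :=
  if f == 0 then (size s).+2 else
  let ps := [seq j <- iota 0 (size s) | ritmo s j == f] in
  if ps is [::] then 1 else (nth 0 s (last 0 ps)).+1.

From mathcomp Require Import all_boot all_order all_fingroup zify.
Set Implicit Arguments. Unset Strict Implicit.

(* RITMO processes values from the largest down and colours each position with
   the least colour unused by the earlier (hence larger-valued) coloured
   positions.  We first show that the result of the algorithm is characterised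
   by this greedy rule at every position (ritmo_greedy, via the invariant
   ritmo_state maintained by each step), and that the greedy rule depends only
   on the relative order of the entries (greedy_unique).  Consequences:
   - inserting iota - 1/2 at the end leaves the old colours unchanged
     (ritmo_ins_old), and the new entry gets the least positive colour g not
     occurring at a value >= iota of sigma (ritmo_ins_new);
   - the colours occurring at values >= iota form an initial segment
     (colour_above_downward), and colour c occurs there iff iota < z_sigma(c)
     (zfun_colour_above), because equally coloured entries increase from left
     to right.
   The theorem then follows: g = f iff f is missing above iota while f - 1
   is not (least_missing_colour), which is the window z(f) <= iota < z(f-1)
   (zfun_window). *)

Definition is_perm (s : seq nat) : Prop :=
  uniq s /\ forall v, (v \in s) = (0 < v <= size s).

Definition least_free_colour (D : nat -> nat) (i n : nat) : nat :=
  (find (fun c => all (fun j => D j != c) (iota 0 i)) (iota 1 n.+1)).+1.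

Lemma ritmo_stepE s D v :
  ritmo_step s D v =
  fun j => if j == index v s then least_free_colour D (index v s) (size s)
           else D j.
Proof. by []. Qed.

(* Since only i <= n colours are forbidden, the search in 1..n+1 succeeds:
   the chosen colour is free and every smaller positive colour is taken. *)
Lemma least_free_colourP D i n : i <= n ->
  (forall j, j < i -> D j != least_free_colour D i n) /\
  (forall c, 0 < c < least_free_colour D i n -> exists2 j, j < i & D j = c).
Proof.
move=> le_in; rewrite /least_free_colour.
set P := fun c => all (fun j => D j != c) (iota 0 i).
set l := iota 1 n.+1.
have has_free : has P l.
  apply/negPn/negP => /hasPn notP.
  have used : {subset l <= map D (iota 0 i)}.
    move=> c /notP /allPn [j j_i /negPn /eqP <-]; exact: map_f.
  have := uniq_leq_size (iota_uniq 1 n.+1) used.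
  by rewrite size_map !size_iota; lia.
have k_lt : find P l < n.+1 by rewrite -(size_iota 1 n.+1) -has_find.
split.
  have := nth_find 0 has_free; rewrite /l nth_iota // add1n => /allP free j j_i.
  by apply: free; rewrite mem_iota.
move=> c /andP [c_gt0 c_lt].
have c_lt' : c.-1 < find P l by lia.
have := before_find 0 c_lt'; rewrite /l nth_iota; last by lia.
rewrite (_ : 1 + c.-1 = c); last by lia.
move=> /negbT /allPn [j]; rewrite mem_iota => /andP [_ j_i].
by move=> /negPn /eqP; exists j.
Qed.

Definition greedy_at (s : seq nat) (C : nat -> nat) (j : nat) : Prop :=
  (forall j', j' < j -> nth 0 s j < nth 0 s j' -> C j' != C j) /\
  (forall c, 0 < c < C j ->
     exists j', [/\ j' < j, nth 0 s j < nth 0 s j' & C j' = c]).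

(* The state of RITMO once all values above t are processed: exactly those
   positions are coloured (colour 0 means uncoloured), all greedily. *)
Definition ritmo_state (s : seq nat) (t : nat) (D : nat -> nat) : Prop :=
  (forall j, (D j != 0) = (t < nth 0 s j)) /\
  (forall j, t < nth 0 s j -> greedy_at s D j).

Section RitmoStep.
Variables (s : seq nat) (t : nat) (D : nat -> nat).
Hypotheses (perm_s : is_perm s) (t_range : 0 < t <= size s).
Hypothesis state_D : ritmo_state s t D.

Let i := index t s.

Let nth_i : nth 0 s i = t.
Proof. by apply: nth_index; rewrite perm_s.2. Qed.

Let only_i j : nth 0 s j = t -> j = i.
Proof.
move=> s_j; case: (ltnP j (size s)) => j_lt.
  by rewrite /i -s_j index_uniq //; case: perm_s.
by move: s_j; rewrite nth_default //; lia.
Qed.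

(* Colouring position i with the least free colour keeps the greedy rule
   at i: the positions before i that are coloured are exactly those whose
   value exceeds t. *)
Let greedy_new : greedy_at s (ritmo_step s D t) i.
Proof.
have i_lt : i < size s by rewrite index_mem perm_s.2.
have [free taken] := least_free_colourP D (ltnW i_lt).
rewrite /greedy_at ritmo_stepE -/i eqxx; split.
  move=> j' j'_i _; rewrite (_ : (j' == i) = false); last by apply/eqP; lia.
  exact: free.
move=> c' c'_range; have [j' j'_i D_j'] := taken c' c'_range.
exists j'; split=> //; last by rewrite (_ : (j' == i) = false) //; apply/eqP; lia.
by rewrite nth_i -state_D.1 D_j'; lia.
Qed.

(* Positions coloured before are unaffected, and their greedy rule only
   involves positions with larger values, hence never position i. *)
Let greedy_old j : t < nth 0 s j -> greedy_at s (ritmo_step s D t) j.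
Proof.
move=> t_lt; have [no_clash all_taken] := state_D.2 j t_lt.
have not_i j' : t < nth 0 s j' -> (j' == i) = false.
  by move=> lt; apply/eqP => ji; move: lt; rewrite ji nth_i ltnn.
rewrite /greedy_at ritmo_stepE -/i not_i //; split.
  by move=> j' j'_j lt; rewrite not_i; [exact: no_clash | lia].
move=> c' /all_taken [j' [j'_j lt D_j']].
by exists j'; rewrite not_i //; lia.
Qed.

Lemma ritmo_step_state : ritmo_state s t.-1 (ritmo_step s D t).
Proof.
split.
  move=> j; rewrite ritmo_stepE -/i; have [-> | ne] := eqVneq j i.
    by rewrite nth_i /least_free_colour; lia.
  have : nth 0 s j != t by apply/eqP => /only_i; apply/eqP.
  by rewrite state_D.1; lia.
move=> j lt; have [-> | ne] := eqVneq j i; first exact: greedy_new.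
have : nth 0 s j != t by apply/eqP => /only_i; apply/eqP.
by move=> ne_t; apply: greedy_old; lia.
Qed.

End RitmoStep.

Lemma is_perm_nth_le s : is_perm s -> forall j, nth 0 s j <= size s.
Proof.
move=> perm_s j; case: (ltnP j (size s)) => j_lt; last by rewrite nth_default.
by have := mem_nth 0 j_lt; rewrite perm_s.2 => /andP [].
Qed.

Lemma ritmo_final_state s : is_perm s -> ritmo_state s 0 (ritmo s).
Proof.
move=> perm_s.
suff: forall k, k <= size s -> ritmo_state s (size s - k)
    (foldl (ritmo_step s) (fun _ => 0) (rev (iota (size s - k).+1 k))).
  by move=> /(_ (size s) (leqnn _)); rewrite subnn.
elim=> [|k IH] k_le.
  rewrite subn0; split=> j; have := is_perm_nth_le perm_s j; last by lia.
  by rewrite eqxx; lia.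
rewrite (_ : (size s - k.+1).+1 = size s - k); last by lia.
rewrite /= rev_cons foldl_rcons (_ : size s - k.+1 = (size s - k).-1); last by lia.
by apply: ritmo_step_state => //; [lia | apply: IH; lia].
Qed.

Lemma ritmo_greedy s : is_perm s ->
  forall j, j < size s -> 0 < ritmo s j /\ greedy_at s (ritmo s) j.
Proof.
move=> perm_s j j_lt; have [coloured greedy] := ritmo_final_state perm_s.
have pos : 0 < nth 0 s j by have := mem_nth 0 j_lt; rewrite perm_s.2 => /andP [].
by rewrite lt0n coloured; split=> //; apply: greedy.
Qed.

Lemma greedy_unique s u C D n :
  (forall j j', j < n -> j' < n ->
     (nth 0 s j < nth 0 s j') = (nth 0 u j < nth 0 u j')) ->
  (forall j, j < n -> 0 < C j /\ greedy_at s C j) ->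
  (forall j, j < n -> 0 < D j /\ greedy_at u D j) ->
  forall j, j < n -> C j = D j.
Proof.
move=> same_order greedyC greedyD; elim/ltn_ind => j IH j_lt.
have [C_pos [C_free C_taken]] := greedyC j j_lt.
have [D_pos [D_free D_taken]] := greedyD j j_lt.
have [lt | lt | //] := ltngtP (C j) (D j).
  have [j' [j'_j gt_u D_j']] := D_taken (C j) (ltac:(lia)).
  have CD_j' : C j' = D j' by apply: IH; lia.
  have gt_s : nth 0 s j < nth 0 s j' by rewrite same_order //; lia.
  by have := C_free j' j'_j gt_s; rewrite CD_j' D_j' eqxx.
have [j' [j'_j gt_s C_j']] := C_taken (D j) (ltac:(lia)).
have CD_j' : C j' = D j' by apply: IH; lia.
have gt_u : nth 0 u j < nth 0 u j' by rewrite -same_order //; lia.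
by have := D_free j' j'_j gt_u; rewrite -CD_j' C_j' eqxx.
Qed.

Lemma ritmo_chain s : is_perm s -> forall d j f, j < size s -> 0 < f ->
  ritmo s j = f + d ->
  exists k, [/\ k < size s, nth 0 s j <= nth 0 s k & ritmo s k = f].
Proof.
move=> perm_s; elim=> [|d IH] j f j_lt f_pos colour_j.
  by exists j; rewrite colour_j addn0.
have [_ [_ taken]] := ritmo_greedy perm_s j_lt.
have [j' [j'_j gt colour_j']] := taken (f + d) (ltac:(lia)).
have [k [k_lt le colour_k]] := IH j' f (ltac:(lia)) f_pos colour_j'.
by exists k; split=> //; lia.
Qed.

Lemma sorted_last_max a r : path leq a r -> forall x, x \in a :: r -> x <= last a r.
Proof.
elim: r a => [|b r IH] a /=; first by move=> _ x; rewrite inE => /eqP ->.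
move=> /andP [ab pr] x; rewrite inE => /orP [/eqP -> | x_r].
  by have := IH b pr b (mem_head _ _); lia.
exact: IH b pr x x_r.
Qed.

Definition colour_above (s : seq nat) (x c : nat) : Prop :=
  exists j, [/\ j < size s, x <= nth 0 s j & ritmo s j = c].

(* z_s(c) is one more than the largest value coloured c: the last position
   of colour c carries the largest such value, because two positions of the
   same colour appear with increasing values. *)
Lemma zfun_colour_above s c x : is_perm s -> 0 < c -> 0 < x ->
  x < zfun s c <-> colour_above s x c.
Proof.
move=> perm_s c_pos x_pos; rewrite /zfun (_ : (c == 0) = false); last by lia.
have memP j : (j \in [seq j <- iota 0 (size s) | ritmo s j == c])
   = (j < size s) && (ritmo s j == c) by rewrite mem_filter mem_iota andbC.
have srt : sorted leq [seq j <- iota 0 (size s) | ritmo s j == c].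
  by apply: sorted_filter; [exact: leq_trans | exact: iota_sorted].
move: memP srt; case: [seq j <- _ | _] => [|a r] memP srt.
  split=> [|[j [j_lt _ colour_j]]]; first lia.
  by have := memP j; rewrite in_nil j_lt colour_j eqxx.
rewrite [last _ _]/=; set p := last a r.
have /andP [p_lt /eqP colour_p] : (p < size s) && (ritmo s p == c).
  by rewrite -memP mem_last.
split=> [x_lt | [j [j_lt x_le colour_j]]]; first by exists p; split=> //; lia.
have j_le_p : j <= p.
  by apply: (sorted_last_max srt); rewrite memP j_lt colour_j eqxx.
have [_ [no_clash _]] := ritmo_greedy perm_s p_lt.
suff : nth 0 s j <= nth 0 s p by lia.
rewrite leqNgt; apply/negP => gt.
have j_p : j < p.
  by rewrite ltn_neqAle j_le_p andbT; apply: contraTneq gt => ->; rewrite ltnn.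
by have := no_clash j j_p gt; rewrite colour_j colour_p eqxx.
Qed.

Lemma colour_above_downward s x c c' : is_perm s ->
  0 < c' <= c -> colour_above s x c -> colour_above s x c'.
Proof.
move=> perm_s c'_range [j [j_lt x_le colour_j]].
have [k [k_lt le colour_k]] :=
  ritmo_chain (d := c - c') perm_s j_lt (ltac:(lia) : 0 < c') (ltac:(lia)).
by exists k; split=> //; lia.
Qed.

(* The window condition of the theorem, read through z: x lies in
   [z_s(f), z_s(f-1)) iff colour f does not occur above x while f-1 does
   (or f = 1, where z_s(0) = |s| + 2 imposes no condition). *)
Lemma zfun_window s x f : is_perm s -> 0 < f -> 0 < x <= (size s).+1 ->
  (~ colour_above s x f /\ (1 < f -> colour_above s x f.-1)) <->
  zfun s f <= x < zfun s f.-1.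
Proof.
move=> perm_s f_pos x_range.
have above c : 0 < c -> x < zfun s c <-> colour_above s x c.
  by move=> c_pos; apply: zfun_colour_above => //; lia.
have not_above : zfun s f <= x <-> ~ colour_above s x f.
  by rewrite leqNgt -(rwP negP); apply: not_iff_compat; apply: above.
have [f_1 | f_gt1] := leqP f 1.
  rewrite (_ : f.-1 = 0); last by lia.
  rewrite [zfun s 0]/zfun /= (_ : x < (size s).+2); last by lia.
  rewrite andbT; split=> [[/not_above] // | /not_above not_f].
  by split=> //; lia.
split=> [[not_f prev] | /andP [/not_above not_f lt_prev]].
  by apply/andP; split; [apply/not_above | apply/above; [lia | apply: prev]].
by split=> // _; apply/above; [lia | exact: lt_prev].
Qed.

Lemma least_missing_colour (A : nat -> Prop) g f :
  (forall c c', 0 < c' <= c -> A c -> A c') ->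
  0 < g -> (forall c, 0 < c < g -> A c) -> ~ A g -> 0 < f ->
  g = f <-> ~ A f /\ (1 < f -> A f.-1).
Proof.
move=> downward g_pos below not_g f_pos; split=> [<- | [not_f prev]].
  by split=> // g_gt1; apply: below; lia.
have [g_lt | f_lt | //] := ltngtP g f.
  by case: not_g; apply: (downward f.-1); [lia | apply: prev; lia].
by case: not_f; apply: below; lia.
Qed.

Lemma is_perm_perm_seq m (sigma : 'S_m) : is_perm (perm_seq sigma).
Proof.
rewrite /is_perm /perm_seq size_map size_enum_ord; split.
  rewrite map_inj_uniq ?enum_uniq // => a b /succn_inj /ord_inj.
  exact: perm_inj.
move=> [|v] /=; first by apply/mapP => [[]].
apply/mapP/idP => [[i _ [->]] // | v_lt].
by exists (sigma^-1 (Ordinal v_lt))%g; rewrite ?mem_enum ?permKV.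
Qed.

Section Insertion.
Variables (s : seq nat) (x : nat).
Hypotheses (perm_s : is_perm s) (x_range : 0 < x <= (size s).+1).

Let shift (v : nat) : nat := if x <= v then v.+1 else v.

Local Notation s' := (ins_perm s x).

Let size_s' : size s' = (size s).+1.
Proof. by rewrite size_rcons size_map. Qed.

Let nth_new : nth 0 s' (size s) = x.
Proof. by rewrite nth_rcons size_map ltnn eqxx. Qed.

Let nth_old j : j < size s -> nth 0 s' j = shift (nth 0 s j).
Proof. by move=> j_lt; rewrite nth_rcons size_map j_lt (nth_map 0). Qed.

Lemma is_perm_ins_perm : is_perm s'.
Proof.
have [uniq_s mem_s] := perm_s; split.
  rewrite rcons_uniq map_inj_uniq; last first.
    by move=> a b; rewrite /shift; do 2 case: ifP; lia.
  by rewrite uniq_s andbT; apply/mapP => [[v _]]; rewrite /shift; case: ifP; lia.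
move=> v; rewrite size_s' mem_rcons inE; apply/orP/idP.
  by case=> [/eqP -> // | /mapP [w]]; rewrite mem_s /shift; case: ifP; lia.
move=> v_range; have [-> | v_ne] := eqVneq v x; [by left | right; apply/mapP].
have [v_lt | v_gt] := ltnP v x; [exists v | exists v.-1];
  by rewrite ?mem_s /shift; case: leqP; lia.
Qed.

(* The old entries keep their relative order, so keep their colours. *)
Lemma ritmo_ins_old j : j < size s -> ritmo s' j = ritmo s j.
Proof.
apply: (greedy_unique (s := s') (u := s) (n := size s)).
- by move=> j1 j2 j1_lt j2_lt; rewrite !nth_old // /shift; do 2 case: ifP; lia.
- by move=> j' j'_lt; apply: (ritmo_greedy is_perm_ins_perm); rewrite size_s'; lia.
- by move=> j' j'_lt; apply: ritmo_greedy.
Qed.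

Lemma ritmo_ins_new (g := ritmo s' (size s)) :
  [/\ 0 < g, ~ colour_above s x g & forall c, 0 < c < g -> colour_above s x c].
Proof.
have [g_pos [free taken]] : 0 < g /\ greedy_at s' (ritmo s') (size s).
  by apply: (ritmo_greedy is_perm_ins_perm); rewrite size_s'.
split=> // [[j [j_lt x_le colour_j]] | c /taken [j [j_lt gt colour_j]]].
  have := free j j_lt; rewrite nth_new nth_old // ritmo_ins_old // colour_j eqxx.
  by rewrite /shift; case: ifP; lia.
exists j; split=> //; last by rewrite -ritmo_ins_old.
by move: gt; rewrite nth_new nth_old // /shift; case: ifP; lia.
Qed.

End Insertion.

Theorem mainTheorem16 (m : nat) (sigma : 'S_m) (f iota : nat) :
  1 <= f -> 1 <= iota <= m.+1 ->
  (ritmo (ins_perm (perm_seq sigma) iota) m = f <->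
   zfun (perm_seq sigma) f <= iota < zfun (perm_seq sigma) f.-1).
Proof.
move=> f_pos iota_range; set s := perm_seq sigma.
have perm_s : is_perm s by apply: is_perm_perm_seq.
have size_s : size s = m by rewrite size_map size_enum_ord.
rewrite -size_s in iota_range *.
have [g_pos g_free g_taken] := ritmo_ins_new perm_s iota_range.
rewrite -(zfun_window perm_s f_pos iota_range).
apply: least_missing_colour => // c c'.
exact: colour_above_downward.
Qed.
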